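(* Let $V=\{1,\dots,n\}$ and let $x=(x_v)_{v\in V}$ be binary variables (all $x_v\in\{0,1\}$, or all $x_v\in\{-1,+1\}$), with configuration space $\mathbb{X}$. Let $\mathcal{G}\subset 2^V$ be a hypergraph whose hyperedges include the singletons $\{v\}$, $v\in V$, and let $$f(x)=\sum_{E\in\mathcal{G}}\theta_E\,\phi_E(x_E),\qquad \phi_E(x_E)=\prod_{v\in E}x_v,$$ with $f^*=\max_{x\in\mathbb{X}}f(x)$. Let an augmented model be given as follows: a finite vertex set $V'$, a hypergraph $\mathcal{G}'\subset 2^{V'}$ (containing the singletons of $V'$), and a surjective map $\Gamma:\mathcal{G}'\to\mathcal{G}$ such that each $E'\in\mathcal{G}'$ is a replica of $E=\Gamma(E')$, i.e. $\Gamma$ restricted to vertices maps $V'$ onto $V$, maps $E'$ bijectively onto $\Gamma(E')$, and maps singletons to singletons. Write $\mathcal{R}(E)=\Gamma^{-1}(E)$, and $A\equiv B$ for $A,B\in\mathcal{G}'$ with $A\neq B$ and $\Gamma(A)=\Gamma(B)$. Let parameters $\theta'_{E'}$, $E'\in\mathcal{G}'$, satisfy $\theta_E=\sum_{E'\in\mathcal{R}(E)}\theta'_{E'}$ for all $E\in\mathcal{G}$, and set $f'(x')=\sum_{E'\in\mathcal{G}'}\theta'_{E'}\phi_{E'}(x'_{E'})$ for $x'\in\mathbb{X}'$ (binary configurations on $V'$). Let $\zeta:\mathbb{X}\to\mathbb{X}'$ be the replication map $\zeta(x)_{v'}=x_{\Gamma(v')}$, so $\zeta(\mathbb{X})$ is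 the set of consistent configurations. Define the Lagrangian $$L(x',\lambda)=f'(x')+\sum_{A\equiv B}\lambda_{A,B}\big(\phi_A(x'_A)-\phi_B(x'_B)\big),$$ the dual function $g(\lambda)=\max_{x'\in\mathbb{X}'}L(x',\lambda)$, and $g^*=\min_\lambda g(\lambda)$. Then $g(\lambda)\ge f^*$ for all $\lambda$, hence $g^*\ge f^*$. If $g(\lambda^* )=g^*$, then exactly one of the following holds: (i) $\arg\max_{x'\in\mathbb{X}'}L(x',\lambda^* )\cap\zeta(\mathbb{X})\neq\emptyset$; then $g^*=f^*$ (strong duality) and the set of all MAP estimates is obtained as $\arg\max_{x'\in\zeta(\mathbb{X})}f'(x')=\arg\max_{x'\in\mathbb{X}'}L(x',\lambda^* )\cap\zeta(\mathbb{X})$; (ii) $\arg\max_{x'\in\mathbb{X}'}L(x',\lambda^* )\cap\zeta(\mathbb{X})=\emptyset$; then there is a duality gap $g^*>f^*$ and for no choice of $\lambda$ does $\arg\max_{x'}L(x',\lambda)$ contain a consistent configuration. Moreover, for any $\lambda^*$, the condition $\arg\max_{x'\in\mathbb{X}'}L(x',\lambda^* )\cap\zeta(\mathbb{X})\neq\emptyset$ holds only if $g(\lambda^* )=g^*$.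
   Context: MAP estimation in a binary graphical model $p(x)\propto\exp f(x)$ amounts to maximizing $f$. Note $f'(\zeta(x))=f(x)$ for all $x\in\mathbb{X}$, so $f^*=\max_{x'\in\zeta(\mathbb{X})}f'(x')$, and this equals maximizing $f'$ subject to $\phi_A(x'_A)=\phi_B(x'_B)$ for all $A\equiv B$; $L$ relaxes these constraints with multipliers $\lambda_{A,B}\in\mathbb{R}$. For consistent $x'\in\zeta(\mathbb{X})$, $\zeta^{-1}(x')$ is the corresponding configuration of $\mathbb{X}$. *)

From mathcomp Require Import all_boot all_order all_algebra.
Set Implicit Arguments. Unset Strict Implicit. Unset Printing Implicit Defensive.
Import Order.TTheory GRing.Theory Num.Theory.
Local Open Scope ring_scope.

Section Model.
Variable R : realFieldType.

Definition bval (pm : bool) (b : bool) : R :=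
  if pm then (if b then 1 else -1) else (if b then 1 else 0).

Definition phi (pm : bool) (k : nat) (E : {set 'I_k}) (x : {ffun 'I_k -> bool}) : R :=
  \prod_(v in E) bval pm (x v).

Definition energy (pm : bool) (k : nat) (G : {set {set 'I_k}}) (th : {set 'I_k} -> R)
  (x : {ffun 'I_k -> bool}) : R :=
  \sum_(E in G) th E * phi pm E x.

Definition maxconf (k : nat) (h : {ffun 'I_k -> bool} -> R) : R :=
  \big[Order.max/h [ffun => false]]_(x : {ffun 'I_k -> bool}) h x.

Definition argmax_on (k : nat) (S : {set {ffun 'I_k -> bool}})
  (h : {ffun 'I_k -> bool} -> R) : {set {ffun 'I_k -> bool}} :=
  [set x in S | [forall y in S, h y <= h x]].

Definition zeta (n m : nat) (gam : 'I_m -> 'I_n) (x : {ffun 'I_n -> bool})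
  : {ffun 'I_m -> bool} := [ffun v' => x (gam v')].

Definition consistent (n m : nat) (gam : 'I_m -> 'I_n) : {set {ffun 'I_m -> bool}} :=
  [set zeta gam x | x : {ffun 'I_n -> bool}].

(* Gamma(E') = gam @: E' ; G' is an augmented model of G via gam *)
Definition replica (n m : nat) (G : {set {set 'I_n}}) (G' : {set {set 'I_m}})
  (gam : 'I_m -> 'I_n) : Prop :=
  [/\ (forall v : 'I_n, exists v' : 'I_m, gam v' = v),
      (forall E', E' \in G' -> gam @: E' \in G),
      (forall E', E' \in G' -> {in E' &, injective gam}) &
      (forall E, E \in G -> exists2 E', E' \in G' & gam @: E' = E)].

(* A == B : A <> B, both in G', same image under Gamma (ordered pairs) *)
Definition equiv_pair (n m : nat) (G' : {set {set 'I_m}}) (gam : 'I_m -> 'I_n)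
  (p : {set 'I_m} * {set 'I_m}) : bool :=
  [&& p.1 \in G', p.2 \in G', p.1 != p.2 & gam @: p.1 == gam @: p.2].

Definition lagr (pm : bool) (n m : nat) (G' : {set {set 'I_m}}) (gam : 'I_m -> 'I_n)
  (th' : {set 'I_m} -> R) (lam : {set 'I_m} * {set 'I_m} -> R)
  (x' : {ffun 'I_m -> bool}) : R :=
  energy pm G' th' x' +
  \sum_(p : {set 'I_m} * {set 'I_m} | equiv_pair G' gam p)
     lam p * (phi pm p.1 x' - phi pm p.2 x').

Definition dualg (pm : bool) (n m : nat) (G' : {set {set 'I_m}}) (gam : 'I_m -> 'I_n)
  (th' : {set 'I_m} -> R) (lam : {set 'I_m} * {set 'I_m} -> R) : R :=
  maxconf (lagr pm G' gam th' lam).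

End Model.

From mathcomp Require Import all_boot all_order all_algebra.
Set Implicit Arguments. Unset Strict Implicit. Unset Printing Implicit Defensive.
Import Order.TTheory GRing.Theory Num.Theory.
Local Open Scope ring_scope.

(* Since theta is split among the replicas, f' agrees with f through zeta,
   and the penalty terms vanish on consistent configurations; hence
   L(zeta x, lam) = f x.  For any h with h (z x) = f x, max h >= max f, with
   equality exactly when some maximizer of h lies in the image of z, and then
   those maximizers are the z-images of the maximizers of f.  So strong
   duality at lam is the same as argmax L(., lam) meeting zeta(X), and any such
   lam attains the lower bound f^* of g. *)

Section MaxConf.
Variables (R : realFieldType) (k : nat).
Implicit Type h : {ffun 'I_k -> bool} -> R.

Lemma maxconf_ge h x : h x <= maxconf h.
Proof. by rewrite /maxconf (bigD1 x) //= le_max lexx. Qed.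

Lemma maxconf_attained h : exists x, maxconf h = h x.
Proof.
rewrite /maxconf; apply: (big_ind (fun M => exists x, M = h x)).
- by exists [ffun => false].
- move=> _ _ [a ->] [b ->]; case: (leP (h a) (h b)) => _; [by exists b | by exists a].
- by move=> x _; exists x.
Qed.

Lemma in_argmax_setT h x :
  (x \in argmax_on [set: {ffun 'I_k -> bool}] h) = (h x == maxconf h).
Proof.
rewrite inE in_setT; apply/forall_inP/eqP => [h_max | ->]; last first.
  by move=> y _; apply: maxconf_ge.
apply/le_anti; rewrite maxconf_ge /=.
by have [y ->] := maxconf_attained h; apply: h_max; rewrite in_setT.
Qed.

End MaxConf.

Section Relaxation.
Variables (R : realFieldType) (k k' : nat).
Variables (f : {ffun 'I_k -> bool} -> R) (h : {ffun 'I_k' -> bool} -> R).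
Variable z : {ffun 'I_k -> bool} -> {ffun 'I_k' -> bool}.
Hypothesis h_z : forall x, h (z x) = f x.

Let img := [set z x | x : {ffun 'I_k -> bool}].

Lemma maxconf_relax : maxconf f <= maxconf h.
Proof. by have [x ->] := maxconf_attained f; rewrite -h_z maxconf_ge. Qed.

Lemma argmax_relax_image :
  argmax_on img h = z @: argmax_on [set: {ffun 'I_k -> bool}] f.
Proof.
apply/setP => y; apply/idP/imsetP => [| [x + ->]].
  rewrite inE => /andP[/imsetP[x _ ->] /forall_inP z_max]; exists x => //.
  rewrite in_argmax_setT; apply/eqP/le_anti; rewrite maxconf_ge /=.
  by have [x' ->] := maxconf_attained f; rewrite -!h_z z_max ?imset_f.
rewrite in_argmax_setT => /eqP x_max; rewrite inE imset_f //=.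
by apply/forall_inP => _ /imsetP[x' _ ->]; rewrite !h_z x_max maxconf_ge.
Qed.

Lemma argmax_relax_tight :
  maxconf h = maxconf f ->
  argmax_on [set: {ffun 'I_k' -> bool}] h :&: img
    = z @: argmax_on [set: {ffun 'I_k -> bool}] f.
Proof.
move=> tight; apply/setP => y; rewrite inE in_argmax_setT tight.
apply/andP/imsetP => [[/eqP y_max /imsetP[x _ y_def]] | [x x_max ->]].
  by exists x; rewrite // in_argmax_setT -h_z -y_def y_max.
by rewrite h_z -in_argmax_setT imset_f.
Qed.

Lemma relax_tightP :
  (argmax_on [set: {ffun 'I_k' -> bool}] h :&: img != set0)
    = (maxconf h == maxconf f).
Proof.
apply/set0Pn/eqP => [[y] | tight].
  rewrite inE in_argmax_setT => /andP[/eqP y_max /imsetP[x _ y_def]].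
  by apply/le_anti; rewrite maxconf_relax andbT -y_max y_def h_z maxconf_ge.
have [x x_max] := maxconf_attained f; exists (z x).
by rewrite argmax_relax_tight // imset_f // in_argmax_setT x_max.
Qed.

End Relaxation.

Section Replication.
Variables (R : realFieldType) (pm : bool) (n m : nat).
Variables (G : {set {set 'I_n}}) (G' : {set {set 'I_m}}) (gam : 'I_m -> 'I_n).
Variables (theta : {set 'I_n} -> R) (theta' : {set 'I_m} -> R).
Hypothesis gam_replica : replica G G' gam.

Lemma phi_zeta (E : {set 'I_m}) x :
  {in E &, injective gam} -> phi R pm E (zeta gam x) = phi R pm (gam @: E) x.
Proof.
by move=> gam_inj; rewrite /phi big_imset //; apply: eq_bigr => v _; rewrite ffunE.
Qed.

Lemma energy_zeta x :
  (forall E, E \in G -> theta E = \sum_(E' in G' | gam @: E' == E) theta' E') ->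
  energy pm G' theta' (zeta gam x) = energy pm G theta x.
Proof.
case: gam_replica => _ gam_G gam_inj _ theta_sum; rewrite /energy.
rewrite (eq_bigr (fun E' => theta' E' * phi R pm (gam @: E') x)); last first.
  by move=> E' E'_G'; rewrite phi_zeta //; apply: gam_inj.
rewrite (@partition_big _ _ _ _ _ _ (mem G') (fun E' => gam @: E') (mem G) _ gam_G) /=.
apply: eq_bigr => E E_G; rewrite theta_sum // mulr_suml.
by apply: eq_bigr => E' /andP[_ /eqP ->].
Qed.

Lemma lagr_penalty_zeta lam x :
  \sum_(p | equiv_pair G' gam p)
     lam p * (phi R pm p.1 (zeta gam x) - phi R pm p.2 (zeta gam x)) = 0.
Proof.
case: gam_replica => _ _ gam_inj _.
apply: big1 => p /and4P[p1_G' p2_G' _ /eqP same_image].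
by rewrite !phi_zeta ?same_image ?subrr ?mulr0 //; apply: gam_inj.
Qed.

End Replication.

Theorem proposition1 (R : realFieldType) (pm : bool) (n m : nat)
  (G : {set {set 'I_n}}) (G' : {set {set 'I_m}}) (gam : 'I_m -> 'I_n)
  (theta : {set 'I_n} -> R) (theta' : {set 'I_m} -> R) :
  (forall v : 'I_n, [set v] \in G) ->
  (forall v' : 'I_m, [set v'] \in G') ->
  replica G G' gam ->
  (forall E, E \in G -> theta E = \sum_(E' in G' | gam @: E' == E) theta' E') ->
  let f := energy pm G theta in
  let f' := energy pm G' theta' in
  let fstar := maxconf f in
  let g := dualg pm G' gam theta' in
  let L := lagr pm G' gam theta' in
  let cons := consistent gam in
  let argL := fun lam => argmax_on [set: {ffun 'I_m -> bool}] (L lam) in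
  (* g(lambda) >= f^* for all lambda *)
  (forall lam, fstar <= g lam) /\
  (* case analysis at a dual minimizer lambda^* *)
  (forall lamS, (forall lam, g lamS <= g lam) ->
     ((argL lamS :&: cons != set0 ->
         g lamS = fstar /\
         [set zeta gam x | x in argmax_on [set: {ffun 'I_n -> bool}] f]
           = argmax_on cons f' /\
         argmax_on cons f' = argL lamS :&: cons) /\
      (argL lamS :&: cons = set0 ->
         fstar < g lamS /\ (forall lam, argL lam :&: cons = set0)))) /\
  (* a consistent maximizer of L only occurs at a dual minimizer *)
  (forall lamS, argL lamS :&: cons != set0 -> forall lam, g lamS <= g lam).
Proof.
move=> _ _ gam_replica theta_sum f f' fstar g L cons argL.
have f'_zeta x : f' (zeta gam x) = f x by apply: energy_zeta.
have L_zeta lam x : L lam (zeta gam x) = f x.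
  by rewrite /L /lagr (lagr_penalty_zeta _ gam_replica) addr0 -/f' f'_zeta.
have weak lam : fstar <= g lam := maxconf_relax (L_zeta lam).
have tightP lam : (argL lam :&: cons != set0) = (g lam == fstar).
  exact: relax_tightP (L_zeta lam).
have strong lamS : argL lamS :&: cons != set0 -> forall lam, g lamS <= g lam.
  by rewrite tightP => /eqP tight lam; rewrite tight.
split=> //; split=> // lamS lamS_min; split=> [meet | empty].
  have /eqP tight : g lamS == fstar by rewrite -tightP.
  by rewrite (argmax_relax_image f'_zeta) (argmax_relax_tight (L_zeta lamS)).
have gap : g lamS != fstar by rewrite -tightP empty eqxx.
split=> [|lam]; first by rewrite lt_def gap weak.
apply/eqP; apply: contraNT gap; rewrite tightP => /eqP g_tight.
by rewrite eq_le weak andbT -g_tight lamS_min.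
Qed.
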